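(* Let $n,m\in\mathbb{N}$ and $g\in C^2[0,1]$. With $I_{n,m}(g)=\frac{1}{m(n+1)}\sum_{k=1}^m\sum_{i=0}^n g\left(\frac{kn-n+i}{mn}\right)$, $$ \left|\int_0^1g(x)\,dx-I_{n,m}(g)\right|\le\frac{1}{12m^2n}\|g''\|_\infty. $$
   Context: $I_{n,m}(g)$ equals $\int_0^1\overline{B}_{n,m}(g;x)\,dx$, where $\overline{B}_{n,m}(g;x)=B_n^{[\frac{k-1}{m},\frac km]}(g;x)$ on $\left[\frac{k-1}{m},\frac km\right]$ and $B_n^{[a,b]}(g;x)=\frac{1}{(b-a)^n}\sum_{i=0}^n\binom ni(x-a)^i(b-x)^{n-i}g(a+i\frac{b-a}{n})$. $\|\cdot\|_\infty$ is the sup norm on $[0,1]$. *)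

From Stdlib Require Import Reals.
From Coquelicot Require Import Coquelicot.
Open Scope R_scope.

Definition has_deriv_on01 (f f' : R -> R) : Prop :=
  forall x, 0 <= x <= 1 ->
    forall eps, 0 < eps -> exists delta, 0 < delta /\
      forall y, 0 <= y <= 1 -> Rabs (y - x) < delta ->
        Rabs (f y - f x - f' x * (y - x)) <= eps * Rabs (y - x).

Definition continuous_on01 (f : R -> R) : Prop :=
  forall x, 0 <= x <= 1 ->
    forall eps, 0 < eps -> exists delta, 0 < delta /\
      forall y, 0 <= y <= 1 -> Rabs (y - x) < delta -> Rabs (f y - f x) < eps.

Definition C2_on01 (g g1 g2 : R -> R) : Prop :=
  has_deriv_on01 g g1 /\ has_deriv_on01 g1 g2 /\ continuous_on01 g2.

Definition sup_norm01 (f : R -> R) : R :=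
  real (Lub_Rbar (fun y => exists x, 0 <= x <= 1 /\ y = Rabs (f x))).

Definition I_nm (n m : nat) (g : R -> R) : R :=
  / (INR m * (INR n + 1)) *
  sum_n_m (fun k : nat =>
     sum_n_m (fun i : nat =>
        g ((INR k * INR n - INR n + INR i) / (INR m * INR n))) 0 n) 1 m.

From Stdlib Require Import Reals Lra Lia Psatz.
From Coquelicot Require Import Coquelicot.
Open Scope R_scope.

(* Let M = ||g''||.  On a block [a, a + h] split into n steps of length
   d = h/n, the rule h/(n+1) * sum_{i=0}^n g(a + i d) is the composite
   trapezoid rule minus d/(n(n+1)) * sum_i (n g_i - (n-i) g_0 - i g_n).  Each
   trapezoid step errs by at most M d^3/12, and each term of the correction
   is 1/d times the error of linear interpolation of g between the block
   ends, at most M d^2 n i (n-i)/2 by convexity of M x^2/2 +- g.  As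
   sum_i i (n-i) = n (n^2-1)/6, the block error is at most M h^3/(12 n), and
   m blocks of length 1/m give the bound. *)

(* Constant extension of a function on [0,1] to all of R, so that the
   derivative and integral of Coquelicot can be used. *)
Definition clamp01 (x : R) : R := Rmax 0 (Rmin 1 x).

Definition extend01 (f : R -> R) (x : R) : R := f (clamp01 x).

Lemma clamp01_id x : 0 <= x <= 1 -> clamp01 x = x.
Proof. intros Hx; unfold clamp01, Rmax, Rmin; repeat destruct Rle_dec; lra. Qed.

Lemma clamp01_range x : 0 <= clamp01 x <= 1.
Proof. unfold clamp01, Rmax, Rmin; repeat destruct Rle_dec; lra. Qed.

Lemma clamp01_lipschitz x y : Rabs (clamp01 y - clamp01 x) <= Rabs (y - x).
Proof.
  unfold clamp01, Rmax, Rmin; repeat destruct Rle_dec;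
    unfold Rabs; repeat destruct Rcase_abs; lra.
Qed.

Lemma extend01_id f x : 0 <= x <= 1 -> extend01 f x = f x.
Proof. intros Hx; unfold extend01; rewrite clamp01_id; auto. Qed.

Lemma has_deriv_on01_continuous f f' : has_deriv_on01 f f' -> continuous_on01 f.
Proof.
  intros Hf x Hx eps Heps.
  destruct (Hf x Hx 1 Rlt_0_1) as [d [Hd Hy]].
  pose proof (Rabs_pos (f' x)) as Hf'.
  set (e := eps / (Rabs (f' x) + 2)).
  assert (He : 0 < e) by (apply Rdiv_lt_0_compat; lra).
  exists (Rmin d e); split; [now apply Rmin_pos|].
  intros y Hy01 Hyx.
  pose proof (Rmin_l d e); pose proof (Rmin_r d e).
  specialize (Hy y Hy01 ltac:(lra)).
  assert (Hsmall : Rabs (y - x) * (Rabs (f' x) + 2) < eps).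
  { replace eps with (e * (Rabs (f' x) + 2)) by (unfold e; field; lra).
    apply Rmult_lt_compat_r; lra. }
  assert (Htri : Rabs (f y - f x)
                 <= Rabs (f y - f x - f' x * (y - x)) + Rabs (f' x * (y - x))).
  { replace (f y - f x) with ((f y - f x - f' x * (y - x)) + f' x * (y - x)) at 1
      by ring.
    apply Rabs_triang. }
  rewrite Rabs_mult in Htri. pose proof (Rabs_pos (y - x)). nra.
Qed.

Lemma continuous_on01_extend01 f : continuous_on01 f ->
  forall x, continuity_pt (extend01 f) x.
Proof.
  intros Hf x eps Heps.
  destruct (Hf (clamp01 x) (clamp01_range x) eps Heps) as [d [Hd Hy]].
  exists d; split; auto. intros y [_ Hyx]. simpl in *. unfold R_dist in *.
  apply Hy; [apply clamp01_range|].
  pose proof (clamp01_lipschitz x y); lra.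
Qed.

Lemma ex_RInt_extend01 f a b : continuous_on01 f -> ex_RInt (extend01 f) a b.
Proof.
  intros Hf. apply (@ex_RInt_continuous R_CompleteNormedModule). intros z _.
  apply continuity_pt_filterlim, continuous_on01_extend01, Hf.
Qed.

Lemma has_deriv_on01_is_derive f f' x : has_deriv_on01 f f' -> 0 < x < 1 ->
  is_derive (extend01 f) x (f' x).
Proof.
  intros Hf Hx. apply is_derive_Reals. intros eps Heps.
  destruct (Hf x ltac:(lra) (eps / 2) ltac:(lra)) as [d [Hd Hy]].
  set (r := Rmin d (Rmin x (1 - x))).
  assert (Hr : 0 < r) by (repeat apply Rmin_pos; lra).
  exists (mkposreal r Hr). intros h Hh0 Hh. simpl in Hh.
  assert (Hrd : r <= d) by apply Rmin_l.
  assert (Hrx : r <= Rmin x (1 - x)) by apply Rmin_r.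
  pose proof (Rmin_l x (1 - x)); pose proof (Rmin_r x (1 - x)).
  assert (Hxh : 0 <= x + h <= 1) by (unfold Rabs in Hh; destruct Rcase_abs; lra).
  rewrite !extend01_id by (auto; lra).
  specialize (Hy (x + h) Hxh ltac:(replace (x + h - x) with h by ring; lra)).
  replace (x + h - x) with h in Hy by ring.
  replace ((f (x + h) - f x) / h - f' x) with ((f (x + h) - f x - f' x * h) / h)
    by (field; auto).
  assert (Hh' : 0 < Rabs h) by (apply Rabs_pos_lt; auto).
  unfold Rdiv; rewrite Rabs_mult, Rabs_inv.
  apply Rle_lt_trans with (eps / 2 * Rabs h * / Rabs h).
  - apply Rmult_le_compat_r; [left; apply Rinv_0_lt_compat|]; auto.
  - field_simplify; lra.
Qed.

Lemma has_deriv_on01_MVT f f' a b : has_deriv_on01 f f' -> 0 <= a <= b -> b <= 1 ->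
  exists c, a <= c <= b /\ f b - f a = f' c * (b - a).
Proof.
  intros Hf Hab Hb.
  destruct (MVT_gen (extend01 f) a b f') as [c [Hc Heq]].
  - intros x Hx. rewrite Rmin_left, Rmax_right in Hx by lra.
    apply has_deriv_on01_is_derive; auto; lra.
  - intros x _. apply continuous_on01_extend01, (has_deriv_on01_continuous f f' Hf).
  - rewrite Rmin_left, Rmax_right in Hc by lra.
    rewrite !extend01_id in Heq by lra. exists c; auto.
Qed.

Lemma has_deriv_on01_comb f f' h h' al be :
  has_deriv_on01 f f' -> has_deriv_on01 h h' ->
  has_deriv_on01 (fun x => al * f x + be * h x) (fun x => al * f' x + be * h' x).
Proof.
  intros Hf Hh x Hx eps Heps.
  pose proof (Rabs_pos al); pose proof (Rabs_pos be).
  set (K := Rabs al + Rabs be + 1).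
  assert (HK : 0 < K) by (unfold K; lra).
  assert (HeK : 0 < eps / K) by (apply Rdiv_lt_0_compat; auto).
  destruct (Hf x Hx (eps / K) HeK) as [d1 [Hd1 H1]].
  destruct (Hh x Hx (eps / K) HeK) as [d2 [Hd2 H2]].
  exists (Rmin d1 d2); split; [now apply Rmin_pos|].
  intros y Hy Hyx.
  pose proof (Rmin_l d1 d2); pose proof (Rmin_r d1 d2).
  specialize (H1 y Hy ltac:(lra)); specialize (H2 y Hy ltac:(lra)).
  replace (al * f y + be * h y - (al * f x + be * h x) - (al * f' x + be * h' x) * (y - x))
    with (al * (f y - f x - f' x * (y - x)) + be * (h y - h x - h' x * (y - x)))
    by ring.
  eapply Rle_trans; [apply Rabs_triang|]. rewrite !Rabs_mult.
  set (t := eps / K * Rabs (y - x)).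
  assert (Ht : 0 <= t) by (apply Rmult_le_pos; [lra | apply Rabs_pos]).
  assert (HtK : t * K = eps * Rabs (y - x)) by (unfold t; field; lra).
  apply Rle_trans with (Rabs al * t + Rabs be * t).
  - apply Rplus_le_compat; apply Rmult_le_compat_l; auto.
  - unfold K in HtK; nra.
Qed.

Lemma has_deriv_on01_id : has_deriv_on01 (fun x => x) (fun _ => 1).
Proof.
  intros x _ eps Heps. exists 1; split; [lra|]. intros y _ _.
  replace (y - x - 1 * (y - x)) with 0 by ring.
  rewrite Rabs_R0. pose proof (Rabs_pos (y - x)). nra.
Qed.

Lemma has_deriv_on01_half_sqr : has_deriv_on01 (fun x => x * x / 2) (fun x => x).
Proof.
  intros x _ eps Heps. exists eps; split; [lra|]. intros y _ Hyx.
  replace (y * y / 2 - x * x / 2 - x * (y - x)) with ((y - x) * (y - x) / 2) by field.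
  unfold Rdiv; rewrite !Rabs_mult, (Rabs_right (/ 2)) by lra.
  pose proof (Rabs_pos (y - x)). nra.
Qed.

Lemma has_deriv_on01_nondecreasing f f' a b : has_deriv_on01 f f' ->
  (forall x, 0 <= x <= 1 -> 0 <= f' x) -> 0 <= a <= b -> b <= 1 -> f a <= f b.
Proof.
  intros Hf Hf' Hab Hb. destruct (has_deriv_on01_MVT f f' a b Hf Hab Hb) as [c [Hc E]].
  specialize (Hf' c ltac:(lra)). nra.
Qed.

Lemma has_deriv_on01_convex f f' f'' u w v :
  has_deriv_on01 f f' -> has_deriv_on01 f' f'' ->
  (forall x, 0 <= x <= 1 -> 0 <= f'' x) -> 0 <= u -> u <= w -> w <= v -> v <= 1 ->
  (v - u) * f w <= (v - w) * f u + (w - u) * f v.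
Proof.
  intros Hf Hf' Hf'' Hu Huw Hwv Hv.
  destruct (has_deriv_on01_MVT f f' u w Hf ltac:(lra) ltac:(lra)) as [c1 [Hc1 E1]].
  destruct (has_deriv_on01_MVT f f' w v Hf ltac:(lra) ltac:(lra)) as [c2 [Hc2 E2]].
  assert (f' c1 <= f' c2) by (apply (has_deriv_on01_nondecreasing f' f''); auto; lra).
  assert (0 <= (v - w) * (w - u)) by nra.
  nra.
Qed.

Lemma is_RInt_chord (p q u v : R) : u < v ->
  is_RInt (fun w => ((v - w) * p + (w - u) * q) / (v - u)) u v ((v - u) * (p + q) / 2).
Proof.
  intros Huv.
  set (F := fun w => (- ((v - w) * (v - w)) / 2 * p + (w - u) * (w - u) / 2 * q) / (v - u)).
  replace ((v - u) * (p + q) / 2) with (minus (F v) (F u))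
    by (unfold F, minus, plus, opp; simpl; field; lra).
  apply (@is_RInt_derive R_CompleteNormedModule F).
  - intros x _. unfold F. auto_derive; [lra | field; lra].
  - intros x _. apply (@ex_derive_continuous R_AbsRing R_NormedModule). auto_derive. lra.
Qed.

Lemma is_RInt_bump (M u v : R) :
  is_RInt (fun w => M * (w - u) * (v - w) / 2) u v (M * (v - u) ^ 3 / 12).
Proof.
  set (F := fun w => M / 2 * (- (w * w * w) / 3 + (u + v) * (w * w) / 2 - u * v * w)).
  replace (M * (v - u) ^ 3 / 12) with (minus (F v) (F u))
    by (unfold F, minus, plus, opp; simpl; field).
  apply (@is_RInt_derive R_CompleteNormedModule F).
  - intros x _. unfold F. auto_derive; [auto | field].
  - intros x _. apply (@ex_derive_continuous R_AbsRing R_NormedModule). auto_derive. auto.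
Qed.

Lemma RInt_dist_le (f h b : R -> R) u v : u <= v ->
  ex_RInt f u v -> ex_RInt h u v -> ex_RInt b u v ->
  (forall x, u < x < v -> Rabs (f x - h x) <= b x) ->
  Rabs (RInt f u v - RInt h u v) <= RInt b u v.
Proof.
  intros Huv Hf Hh Hb Hfhb.
  assert (Hfh := @ex_RInt_minus R_NormedModule f h u v Hf Hh).
  replace (RInt f u v - RInt h u v) with (RInt (fun x => minus (f x) (h x)) u v)
    by (rewrite (@RInt_minus R_CompleteNormedModule); auto).
  eapply Rle_trans; [apply abs_RInt_le; auto|].
  apply RInt_le; auto. exact (ex_RInt_norm _ _ _ Hfh).
Qed.

Lemma RInt_uniform_partition (f : R -> R) a d N : (forall x y, ex_RInt f x y) ->
  RInt f a (a + INR (S N) * d)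
    = sum_f_R0 (fun j => RInt f (a + INR j * d) (a + INR (S j) * d)) N.
Proof.
  intros Hf. induction N as [|N IH].
  - simpl. f_equal; ring.
  - rewrite tech5, <- IH.
    symmetry; apply (@RInt_Chasles R_CompleteNormedModule); auto.
Qed.

Lemma sum_f_R0_INR N : sum_f_R0 INR N = INR N * (INR N + 1) / 2.
Proof. induction N as [|N IH]; [simpl; field|]. rewrite tech5, IH, S_INR; field. Qed.

Lemma sum_f_R0_INR_sqr N :
  sum_f_R0 (fun i => INR i * INR i) N = INR N * (INR N + 1) * (2 * INR N + 1) / 6.
Proof. induction N as [|N IH]; [simpl; field|]. rewrite tech5, IH, S_INR; field. Qed.

Lemma sum_f_R0_affine (a b : nat -> R) (x y z : R) N :
  sum_f_R0 (fun i => x * a i + y * b i + z) N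
    = x * sum_f_R0 a N + y * sum_f_R0 b N + z * INR (S N).
Proof.
  rewrite !plus_sum, sum_cte, !scal_sum.
  f_equal; f_equal; apply sum_eq; intros; ring.
Qed.

Lemma sum_f_R0_trapezoid (c : nat -> R) N :
  sum_f_R0 (fun i => (c i + c (S i)) / 2) N = sum_f_R0 c (S N) - (c 0%nat + c (S N)) / 2.
Proof.
  induction N as [|N IH]; [simpl; field|].
  rewrite tech5, IH, (tech5 c (S N)); field.
Qed.

Definition mean_rule (n : nat) (g : R -> R) (a h : R) : R :=
  h / (INR n + 1) * sum_f_R0 (fun i => g (a + INR i * (h / INR n))) n.

Lemma mean_trapezoid_correction (c : nat -> R) (d : R) n : (0 < n)%nat ->
  INR n * d / (INR n + 1) * sum_f_R0 c n
    = d * (sum_f_R0 c n - (c 0%nat + c n) / 2)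
      - d / (INR n * (INR n + 1))
        * sum_f_R0 (fun i => INR n * c i - (INR n - INR i) * c 0%nat - INR i * c n) n.
Proof.
  intros Hn. assert (Hn' : 0 < INR n) by (apply lt_0_INR; auto).
  rewrite (sum_eq (fun i => INR n * c i - (INR n - INR i) * c 0%nat - INR i * c n)
                  (fun i => INR n * c i + (c 0%nat - c n) * INR i + (- INR n * c 0%nat)))
    by (intros; ring).
  rewrite sum_f_R0_affine, sum_f_R0_INR, S_INR. field. lra.
Qed.

Section SecondDerivativeBound.

Variables (g g1 g2 : R -> R) (M : R).
Hypothesis Hg : C2_on01 g g1 g2.
Hypothesis HM : forall x, 0 <= x <= 1 -> Rabs (g2 x) <= M.

Local Notation node a d i := (g (a + INR i * d)).

(* [M x^2/2 + g] and [M x^2/2 - g] are convex when [|g''| <= M]. *)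
Lemma C2_on01_chord_error u w v : 0 <= u -> u <= w -> w <= v -> v <= 1 ->
  Rabs ((v - u) * g w - ((v - w) * g u + (w - u) * g v))
    <= M * (w - u) * (v - w) * (v - u) / 2.
Proof.
  intros Hu Huw Hwv Hv. destruct Hg as [Hg0 [Hg1 _]].
  assert (Hside : forall s, s = 1 \/ s = -1 ->
    s * ((v - u) * g w - ((v - w) * g u + (w - u) * g v))
      <= M * (w - u) * (v - w) * (v - u) / 2).
  { intros s Hs.
    assert (Hconvex := has_deriv_on01_convex _ _ _ u w v
      (has_deriv_on01_comb _ _ _ _ M s has_deriv_on01_half_sqr Hg0)
      (has_deriv_on01_comb _ _ _ _ M s has_deriv_on01_id Hg1)).
    simpl in Hconvex.
    assert (Hpos : forall x, 0 <= x <= 1 -> 0 <= M * 1 + s * g2 x).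
    { intros x Hx. specialize (HM x Hx).
      destruct Hs; subst; unfold Rabs in HM; destruct Rcase_abs; lra. }
    specialize (Hconvex Hpos Hu Huw Hwv Hv).
    destruct Hs; subst; ring_simplify in Hconvex; ring_simplify; lra. }
  unfold Rabs; destruct Rcase_abs.
  - specialize (Hside (-1) (or_intror eq_refl)); lra.
  - specialize (Hside 1 (or_introl eq_refl)); lra.
Qed.

Lemma ex_RInt_extend01_C2 x y : ex_RInt (extend01 g) x y.
Proof.
  apply ex_RInt_extend01. destruct Hg as [Hg0 _].
  exact (has_deriv_on01_continuous _ _ Hg0).
Qed.

Lemma trapezoid_error u v : 0 <= u -> u <= v -> v <= 1 ->
  Rabs (RInt (extend01 g) u v - (v - u) * (g u + g v) / 2) <= M * (v - u) ^ 3 / 12.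
Proof.
  intros Hu Huv Hv.
  destruct (Req_dec u v) as [<- | Hne].
  { rewrite RInt_point. unfold zero; simpl.
    replace (0 - (u - u) * (g u + g u) / 2) with 0 by field.
    rewrite Rabs_R0. right; field. }
  assert (Huv' : u < v) by lra.
  rewrite <- (is_RInt_unique _ _ _ _ (is_RInt_chord (g u) (g v) u v Huv')).
  rewrite <- (is_RInt_unique _ _ _ _ (is_RInt_bump M u v)).
  apply RInt_dist_le; auto.
  - apply ex_RInt_extend01_C2.
  - eexists; apply is_RInt_chord; auto.
  - eexists; apply is_RInt_bump.
  - intros x Hx. rewrite extend01_id by lra.
    replace (g x - ((v - x) * g u + (x - u) * g v) / (v - u))
      with (((v - u) * g x - ((v - x) * g u + (x - u) * g v)) / (v - u)) by (field; lra).
    unfold Rdiv at 1. rewrite Rabs_mult, Rabs_inv, (Rabs_right (v - u)) by lra.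
    apply Rle_trans with (M * (x - u) * (v - x) * (v - u) / 2 * / (v - u)).
    + apply Rmult_le_compat_r; [left; apply Rinv_0_lt_compat; lra|].
      apply C2_on01_chord_error; lra.
    + right; field; lra.
Qed.

Lemma composite_trapezoid_error a d N : 0 <= a -> 0 < d -> a + INR (S N) * d <= 1 ->
  Rabs (RInt (extend01 g) a (a + INR (S N) * d)
        - d * (sum_f_R0 (fun i => node a d i) (S N) - (node a d 0 + node a d (S N)) / 2))
    <= INR (S N) * (M * d ^ 3 / 12).
Proof.
  intros Ha Hd Hb.
  rewrite RInt_uniform_partition by exact ex_RInt_extend01_C2.
  rewrite <- (sum_f_R0_trapezoid (fun i => node a d i)), scal_sum, <- minus_sum.
  eapply Rle_trans; [apply Rsum_abs|].
  rewrite Rmult_comm, <- sum_cte. apply sum_Rle. intros j Hj.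
  assert (HSj : INR (S j) <= INR (S N)) by (apply le_INR; lia).
  assert (Hstep : a + INR (S j) * d - (a + INR j * d) = d) by (rewrite S_INR; ring).
  pose proof (pos_INR j).
  replace ((node a d j + node a d (S j)) / 2 * d) with
    ((a + INR (S j) * d - (a + INR j * d)) * (node a d j + node a d (S j)) / 2)
    by (rewrite Hstep; field).
  replace (M * d ^ 3 / 12) with (M * (a + INR (S j) * d - (a + INR j * d)) ^ 3 / 12)
    by (rewrite Hstep; reflexivity).
  apply trapezoid_error; nra.
Qed.

Lemma chord_correction_bound a d n : 0 <= a -> 0 < d -> a + INR n * d <= 1 ->
  Rabs (sum_f_R0 (fun i => INR n * node a d i - (INR n - INR i) * node a d 0
                           - INR i * node a d n) n)
    <= M * d ^ 2 * INR n ^ 2 * (INR n ^ 2 - 1) / 12.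
Proof.
  intros Ha Hd Hb. set (k := INR n).
  eapply Rle_trans; [apply Rsum_abs|].
  apply Rle_trans with (sum_f_R0 (fun i => M * d ^ 2 * k ^ 2 / 2 * INR i
                                           + (- (M * d ^ 2 * k / 2)) * (INR i * INR i) + 0) n).
  - apply sum_Rle. intros i Hi.
    assert (Hik : INR i <= k) by (apply le_INR; lia).
    pose proof (pos_INR i).
    assert (Hchord := C2_on01_chord_error a (a + INR i * d) (a + k * d)
                        Ha ltac:(nra) ltac:(nra) Hb).
    replace (a + INR 0 * d) with a by (simpl; ring).
    replace ((a + k * d - a) * g (a + INR i * d)
             - ((a + k * d - (a + INR i * d)) * g a + (a + INR i * d - a) * g (a + k * d)))
      with (d * (k * g (a + INR i * d) - (k - INR i) * g a - INR i * g (a + k * d)))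
      in Hchord by ring.
    rewrite Rabs_mult, (Rabs_right d) in Hchord by lra.
    apply Rmult_le_reg_l with d; [lra|].
    eapply Rle_trans; [exact Hchord|]. right; field.
  - rewrite sum_f_R0_affine, sum_f_R0_INR, sum_f_R0_INR_sqr. fold k. right; field.
Qed.

Lemma mean_rule_error n a h : (0 < n)%nat -> 0 <= a -> 0 < h -> a + h <= 1 ->
  Rabs (RInt (extend01 g) a (a + h) - mean_rule n g a h) <= M * h ^ 3 / (12 * INR n).
Proof.
  intros Hn Ha Hh Hb. destruct n as [|p]; [lia|].
  set (k := INR (S p)). assert (Hk : 1 <= k) by (apply (le_INR 1); lia).
  set (d := h / k). assert (Hd : 0 < d) by (apply Rdiv_lt_0_compat; lra).
  assert (Hhd : h = k * d) by (unfold d; field; lra).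
  unfold mean_rule. fold k d. rewrite Hhd in *.
  assert (Hmean := mean_trapezoid_correction (fun i => node a d i) d (S p) ltac:(lia)).
  fold k in Hmean. rewrite Hmean.
  assert (Htrap := composite_trapezoid_error a d p Ha Hd Hb). fold k in Htrap.
  assert (Hcorr := chord_correction_bound a d (S p) Ha Hd Hb). fold k in Hcorr.
  set (T := d * (_ - _)) in *.
  set (C := sum_f_R0 (fun i => k * _ - _ - _) (S p)) in *.
  replace (RInt (extend01 g) a (a + k * d) - (T - d / (k * (k + 1)) * C))
    with ((RInt (extend01 g) a (a + k * d) - T) + d / (k * (k + 1)) * C) by ring.
  assert (Hw : 0 < d / (k * (k + 1))) by (apply Rdiv_lt_0_compat; nra).
  eapply Rle_trans; [apply Rabs_triang|].
  rewrite Rabs_mult, (Rabs_right (d / _)) by lra.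
  apply Rle_trans with (k * (M * d ^ 3 / 12)
                        + d / (k * (k + 1)) * (M * d ^ 2 * k ^ 2 * (k ^ 2 - 1) / 12)).
  - apply Rplus_le_compat; auto. apply Rmult_le_compat_l; lra.
  - right; field; lra.
Qed.

Lemma composite_mean_rule_error n q : (0 < n)%nat ->
  Rabs (RInt (extend01 g) 0 1
        - sum_f_R0 (fun j => mean_rule n g (INR j * / INR (S q)) (/ INR (S q))) q)
    <= / (12 * INR (S q) ^ 2 * INR n) * M.
Proof.
  intros Hn. set (h := / INR (S q)).
  assert (Hq : 0 < INR (S q)) by (apply lt_0_INR; lia).
  assert (Hn' : 0 < INR n) by (apply lt_0_INR; lia).
  assert (Hh : 0 < h) by (apply Rinv_0_lt_compat; lra).
  replace 1 with (0 + INR (S q) * h) at 1 by (unfold h; field; lra).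
  rewrite RInt_uniform_partition, <- minus_sum by exact ex_RInt_extend01_C2.
  eapply Rle_trans; [apply Rsum_abs|].
  apply Rle_trans with (sum_f_R0 (fun _ => M * h ^ 3 / (12 * INR n)) q).
  - apply sum_Rle. intros j Hj.
    assert (HSj : INR (S j) * h <= 1).
    { unfold h. apply (Rmult_le_reg_r (INR (S q))); [lra|].
      rewrite Rmult_assoc, Rinv_l, Rmult_1_r, Rmult_1_l by lra. apply le_INR; lia. }
    rewrite S_INR in HSj. pose proof (pos_INR j).
    replace (0 + INR j * h) with (INR j * h) by ring.
    replace (0 + INR (S j) * h) with (INR j * h + h) by (rewrite S_INR; ring).
    apply mean_rule_error; auto; nra.
  - rewrite sum_cte. right. unfold h. field. lra.
Qed.

End SecondDerivativeBound.

Lemma sup_norm01_ge f : continuous_on01 f ->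
  forall x, 0 <= x <= 1 -> Rabs (f x) <= sup_norm01 f.
Proof.
  intros Hf.
  assert (Habs : continuous_on01 (fun x => Rabs (f x))).
  { intros x Hx eps Heps. destruct (Hf x Hx eps Heps) as [d [Hd Hy]].
    exists d; split; auto. intros y Hy1 Hy2.
    eapply Rle_lt_trans; [apply Rabs_triang_inv2 | auto]. }
  destruct (continuity_ab_maj _ 0 1 ltac:(lra)
              (fun c _ => continuous_on01_extend01 _ Habs c)) as [xmax [Hmax _]].
  set (E := fun y => exists x, 0 <= x <= 1 /\ y = Rabs (f x)).
  destruct (Lub_Rbar_correct E) as [Hub Hlub].
  assert (Hbounded : Rbar_le (Lub_Rbar E) (extend01 (fun x => Rabs (f x)) xmax)).
  { apply Hlub. intros y [x [Hx ->]]. simpl.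
    specialize (Hmax x Hx). rewrite extend01_id in Hmax; auto. }
  intros x Hx.
  assert (Hx' : Rbar_le (Rabs (f x)) (Lub_Rbar E)) by (apply Hub; exists x; auto).
  unfold sup_norm01. fold E.
  destruct (Lub_Rbar E); simpl in *; tauto.
Qed.

Lemma I_nm_mean_rule n m g : (0 < n)%nat -> (0 < m)%nat ->
  I_nm n m g = sum_f_R0 (fun j => mean_rule n g (INR j * / INR m) (/ INR m)) (pred m).
Proof.
  intros Hn Hm. destruct m as [|q]; [lia|]. simpl pred.
  assert (Hn' : 0 < INR n) by (apply lt_0_INR; auto).
  assert (Hm' : 0 < INR (S q)) by (apply lt_0_INR; lia).
  unfold I_nm, mean_rule.
  rewrite <- sum_n_m_S. change (sum_n_m ?a 0 q) with (sum_n a q).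
  rewrite sum_n_Reals, scal_sum. apply sum_eq. intros j _.
  change (sum_n_m ?a 0 n) with (sum_n a n). rewrite sum_n_Reals.
  replace (/ INR (S q) / (INR n + 1)) with (/ (INR (S q) * (INR n + 1))) by (field; lra).
  rewrite Rmult_comm. f_equal. apply sum_eq. intros i _. f_equal.
  rewrite S_INR. field. lra.
Qed.

Theorem mainTheorem5 (n m : nat) (g g1 g2 : R -> R) :
  (1 <= n)%nat -> (1 <= m)%nat ->
  C2_on01 g g1 g2 ->
  Rabs (RInt g 0 1 - I_nm n m g)
    <= / (12 * (INR m) ^ 2 * INR n) * sup_norm01 g2.
Proof.
  intros Hn Hm Hg.
  assert (HM := sup_norm01_ge g2 (proj2 (proj2 Hg))).
  rewrite (I_nm_mean_rule n m g Hn Hm).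
  replace (RInt g 0 1) with (RInt (extend01 g) 0 1).
  2: { apply RInt_ext. intros x Hx. rewrite Rmin_left, Rmax_right in Hx by lra.
       apply extend01_id; lra. }
  destruct m as [|q]; [lia|].
  exact (composite_mean_rule_error g g1 g2 _ Hg HM n q Hn).
Qed.
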